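(* Let $\ell\le d\le n/2$ and suppose $d$ is known in advance to the algorithm. Any adaptive deterministic group testing algorithm that, for every defective set $I\subseteq[n]$ with $|I|=d$, detects $\ell$ defective items must make (in the worst case over $I$) at least $\max(\ell\log(n/d),\log n-1)=\Omega(\ell\log(n/d)+\log n)$ tests.
   Context: Group testing: items $X=[n]$, unknown defective set $I\subseteq X$ with $d=|I|$. A test $Q\subseteq X$ has answer $1$ if $Q\cap I\neq\emptyset$ and $0$ otherwise; the algorithm accesses $I$ only through tests, and in an adaptive algorithm tests may depend on previous answers. ''Detects $\ell$ defective items'' means it outputs $L\subseteq I$ with $|L|=\ell$. ''$d$ is known in advance'' means the algorithm is given an integer $D$ with $d/4\le D\le 4d$ (in particular, the bound applies even when the algorithm is given $d$ exactly). Logarithms are base 2. *)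

From mathcomp Require Import all_boot.
From Stdlib Require Import Reals.

Set Implicit Arguments. Unset Strict Implicit. Unset Printing Implicit Defensive.

(* An adaptive deterministic group testing algorithm on items 'I_n is a
   (finite) decision tree: at an internal node it asks test Q; the answer
   is 1 iff Q meets the defective set I, and it then continues in the
   corresponding subtree. *)
Inductive gtree (n : nat) : Type :=
  | Leaf (L : {set 'I_n})
  | Node (Q : {set 'I_n}) (t0 t1 : gtree n).

Definition test_ans (n : nat) (I Q : {set 'I_n}) : bool := Q :&: I != set0.

Fixpoint gt_output (n : nat) (t : gtree n) (I : {set 'I_n}) : {set 'I_n} :=
  match t with
  | Leaf L => L
  | Node Q t0 t1 => if test_ans I Q then gt_output t1 I else gt_output t0 I
  end.

Fixpoint gt_tests (n : nat) (t : gtree n) (I : {set 'I_n}) : nat :=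
  match t with
  | Leaf _ => 0
  | Node Q t0 t1 => (if test_ans I Q then gt_tests t1 I else gt_tests t0 I).+1
  end.

Definition detects (n d l : nat) (t : gtree n) : Prop :=
  forall I : {set 'I_n}, #|I| = d ->
    gt_output t I \subset I /\ #|gt_output t I| = l.

Definition log2 (x : R) : R := (ln x / ln 2)%R.

(** A decision tree whose runs take at most [D] tests has at most [2^D]
    distinct outputs on the [d]-subsets.
    Every output has [l] elements and lies inside the defective set, so each
    one accounts for at most [C(n-l, d-l)] of the [C(n, d)] defective sets,
    and [C(n, d) / C(n-l, d-l) >= (n/d)^l] gives [D >= l log(n/d)].
    Choosing one element in every output gives a set of at most [2^D] items
    that meets every [d]-subset, hence has more than [n - d >= n/2]
    elements, and [D >= log n - 1]. *)

From mathcomp Require Import all_boot zify.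
From Stdlib Require Import Reals Lra.
(* [Reals] rebinds [^] on [nat] to [Nat.pow]; re-importing restores [expn]. *)
From mathcomp Require Import ssrnat.

Set Implicit Arguments. Unset Strict Implicit. Unset Printing Implicit Defensive.

Lemma card_gt_output_le n (t : gtree n) (F : {set {set 'I_n}}) (D : nat) :
  (forall I, I \in F -> gt_tests t I <= D) ->
  #|gt_output t @: F| <= 2 ^ D.
Proof.
elim: t F D => [L|Q t0 IH0 t1 IH1] F D tests_le.
  apply: (@leq_trans #|[set L]|); last by rewrite cards1 expn_gt0.
  by apply/subset_leq_card/subsetP => _ /imsetP[I _ ->]; rewrite set11.
case: D tests_le => [|D] tests_le.
  suff -> : F = set0 by rewrite imset0 cards0.
  by apply/setP => I; rewrite inE; apply/negP => /tests_le.
pose F0 := [set I in F | ~~ test_ans I Q].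
pose F1 := [set I in F | test_ans I Q].
have out_sub : gt_output (Node Q t0 t1) @: F
               \subset gt_output t0 @: F0 :|: gt_output t1 @: F1.
  apply/subsetP => _ /imsetP[I IF ->] /=; rewrite inE.
  by case: ifP => ans; apply/orP; [right|left]; apply: imset_f; rewrite inE IF ans.
have card0 : #|gt_output t0 @: F0| <= 2 ^ D.
  by apply: IH0 => I; rewrite inE => /andP[/tests_le /= + /negbTE ans]; rewrite ans.
have card1 : #|gt_output t1 @: F1| <= 2 ^ D.
  by apply: IH1 => I; rewrite inE => /andP[/tests_le /= + ans]; rewrite ans.
apply: leq_trans (subset_leq_card out_sub) _.
by rewrite cardsU expnS; lia.
Qed.

Lemma exists_draw (T : finType) (A : {set T}) k :
  k <= #|A| -> exists2 B : {set T}, B \subset A & #|B| = k.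
Proof.
rewrite -bin_gt0 -cards_draws => /card_gt0P[B].
by rewrite inE => /andP[sBA /eqP cardB]; exists B.
Qed.

Lemma card_supsets_le (T : finType) (L : {set T}) d :
  #|[set I : {set T} | L \subset I & #|I| == d]| <= 'C(#|T| - #|L|, d - #|L|).
Proof.
rewrite -[in #|T| - _](cardsC L) addKn -cards_draws.
rewrite -(@card_in_imset _ _ (fun I => I :\: L)); last first.
  move=> I J; rewrite !inE => /andP[sLI _] /andP[sLJ _] eqD.
  by rewrite -(setID I L) -(setID J L) eqD (setIidPr sLI) (setIidPr sLJ).
apply/subset_leq_card/subsetP => _ /imsetP[I /[!inE] /andP[sLI /eqP cardI] ->].
by rewrite cardsDS // cardI eqxx andbT setDE subsetIr.
Qed.

Section DoubleCounting.

Variables (T : finType) (d l : nat) (f : {set T} -> {set T}).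
Hypothesis f_draw : forall I : {set T}, #|I| = d -> f I \subset I /\ #|f I| = l.

Lemma bin_le_card_image :
  'C(#|T|, d) <= #|f @: [set I : {set T} | #|I| == d]| * 'C(#|T| - l, d - l).
Proof.
set Fd := [set I : {set T} | #|I| == d].
rewrite -card_draws -/Fd -sum1_card.
rewrite (partition_big f (mem (f @: Fd))) /=; last by move=> I IFd; apply: imset_f.
rewrite -sum_nat_const; apply: leq_sum => _ /imsetP[I0 /[1!inE] /eqP/f_draw[_ cardL] ->].
rewrite sum1dep_card -cardL (leq_trans _ (card_supsets_le _ _)) //.
apply/subset_leq_card/subsetP => I; rewrite !inE => /andP[/eqP cardI /eqP <-].
by rewrite cardI eqxx andbT; case: (f_draw cardI).
Qed.

Lemma card_image_gt : 0 < l -> d <= #|T| ->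
  #|T| - d < #|f @: [set I : {set T} | #|I| == d]|.
Proof.
move=> l_gt0 le_dT; set O := f @: _.
have f_nonempty (I : {set T}) : #|I| = d -> exists x, x \in f I.
  by move=> /f_draw[_ cardfI]; apply/card_gt0P; rewrite cardfI.
have [I0 _ /f_nonempty[x0 _]] : exists2 I0 : {set T}, I0 \subset setT & #|I0| = d.
  by apply: exists_draw; rewrite cardsT.
pose rep (L : {set T}) := odflt x0 [pick x in L].
rewrite ltnNge; apply/negP => le_O.
have [I sIX cardI] : exists2 I : {set T}, I \subset ~: (rep @: O) & #|I| = d.
  by apply: exists_draw; have := cardsC (rep @: O); have := leq_imset_card rep O; lia.
have [y fIy] := f_nonempty I cardI.
have rep_fI : rep (f I) \in f I by rewrite /rep; case: pickP => [x //|/(_ y)]; rewrite fIy.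
have [sfI _] := f_draw cardI.
move/subsetP: sIX => /(_ _ (subsetP sfI _ rep_fI)); rewrite inE => /negP; apply.
by apply/imset_f/imset_f; rewrite inE cardI.
Qed.

End DoubleCounting.

Lemma leq_expn_bin_sub n d l : l <= d -> d <= n ->
  n ^ l * 'C(n - l, d - l) <= d ^ l * 'C(n, d).
Proof.
move=> + le_dn; elim: l => [|l IHl] lt_ld; first by rewrite !subn0 !expn0.
have bin_step : (n - l) * 'C(n - l.+1, d - l.+1) = (d - l) * 'C(n - l, d - l).
  have := mul_bin_diag (n - l) (d - l.+1).
  have -> : (n - l).-1 = n - l.+1 by lia.
  by have -> : (d - l.+1).+1 = d - l by lia.
rewrite -(@leq_pmul2r (n - l)) ?subn_gt0 ?(leq_trans lt_ld) //.
rewrite expnS -mulnA [_ * (n - l)]mulnC bin_step mulnACA.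
rewrite [d ^ _]expnS -[X in _ <= X]mulnA [_ * (n - l)]mulnC [X in _ <= X]mulnACA.
apply: leq_mul; last exact: IHl (ltnW lt_ld).
by rewrite !mulnBr [n * d]mulnC leq_sub2l // leq_mul2r le_dn orbT.
Qed.

Lemma gt_tests_worst_case n d l (t : gtree n) :
  0 < l -> l <= d -> d.*2 <= n -> detects d l t ->
  exists2 I : {set 'I_n}, #|I| = d &
    n ^ l <= 2 ^ gt_tests t I * d ^ l /\ n <= 2 ^ (gt_tests t I).+1.
Proof.
move=> l_gt0 le_ld le_2dn detect_t.
have le_dn : d <= n by lia.
have [I0 _ cardI0] : exists2 I0 : {set 'I_n}, I0 \subset setT & #|I0| = d.
  by apply: exists_draw; rewrite cardsT card_ord.
have [I /eqP cardI worst] :=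
  @arg_maxnP _ I0 (fun I : {set 'I_n} => #|I| == d) (gt_tests t) (introT eqP cardI0).
exists I => //; set D := gt_tests t I.
have card_out : #|gt_output t @: [set I : {set 'I_n} | #|I| == d]| <= 2 ^ D.
  by apply: card_gt_output_le => J; rewrite inE => /worst.
have := @bin_le_card_image _ d l (gt_output t) detect_t; rewrite card_ord => bin_le.
have := @card_image_gt _ d l (gt_output t) detect_t l_gt0; rewrite card_ord => /(_ le_dn) n_lt.
split; last by rewrite expnS; lia.
rewrite -(@leq_pmul2r 'C(n - l, d - l)) ?bin_gt0 ?leq_sub2r //.
apply: leq_trans (leq_expn_bin_sub le_ld le_dn) _.
rewrite [2 ^ D * _]mulnC -mulnA leq_mul2l (leq_trans bin_le) ?orbT //.
by rewrite leq_mul2r card_out orbT.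
Qed.

Section Log2.
Local Open Scope R_scope.

Lemma INR_expn m k : INR (m ^ k)%N = INR m ^ k.
Proof. by elim: k => [|k IHk]; rewrite ?expn0 // expnS mulnE mult_INR IHk. Qed.

Lemma log2_pow x k : 0 < x -> log2 (x ^ k) = INR k * log2 x.
Proof. by move=> x_gt0; rewrite /log2 ln_pow // /Rdiv Rmult_assoc. Qed.

Lemma log2_le_INR x k : 0 < x -> x <= 2 ^ k -> log2 x <= INR k.
Proof.
move=> x_gt0 x_le; have ln2_gt0 : 0 < ln 2 by rewrite -ln_1; apply: ln_increasing; lra.
have ln_le : ln x <= INR k * ln 2.
  rewrite -ln_pow; last lra.
  by case: (Rle_lt_or_eq_dec _ _ x_le) => [/(ln_increasing _ _ x_gt0)|->]; [left|right].
apply: (Rmult_le_reg_r (ln 2)) => //.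
rewrite /log2 /Rdiv Rmult_assoc Rinv_l ?Rmult_1_r //; lra.
Qed.

Lemma log2_lower_bounds n d l D : (0 < d)%N -> (d <= n)%N ->
  (n ^ l <= 2 ^ D * d ^ l)%N -> (n <= 2 ^ D.+1)%N ->
  Rmax (INR l * log2 (INR n / INR d)) (log2 (INR n) - 1) <= INR D.
Proof.
move=> d_gt0 le_dn /leP/le_INR ratio_le /leP/le_INR n_le.
have INR2 : INR 2 = 2 by rewrite /=; lra.
rewrite mulnE mult_INR !INR_expn INR2 in ratio_le; rewrite INR_expn INR2 in n_le.
have d_gt0R : 0 < INR d by apply/lt_0_INR/ltP.
have n_gt0R : 0 < INR n by apply/lt_0_INR/ltP; lia.
apply: Rmax_lub; last by have := log2_le_INR n_gt0R n_le; rewrite S_INR; lra.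
rewrite -log2_pow; last exact: Rdiv_lt_0_compat.
apply: log2_le_INR; first exact/pow_lt/Rdiv_lt_0_compat.
have dl_gt0 : 0 < INR d ^ l by apply: pow_lt.
apply: (Rmult_le_reg_r (INR d ^ l)) => //.
rewrite -Rpow_mult_distr /Rdiv Rmult_assoc Rinv_l ?Rmult_1_r; lra.
Qed.

End Log2.

Theorem theorem2 (n d l : nat) (t : gtree n) :
  (1 <= l)%N -> (l <= d)%N -> (d.*2 <= n)%N ->
  detects d l t ->
  exists I : {set 'I_n}, #|I| = d /\
    (Rmax (INR l * log2 (INR n / INR d)) (log2 (INR n) - 1) <= INR (gt_tests t I))%R.
Proof.
move=> l_gt0 le_ld le_2dn /(gt_tests_worst_case l_gt0 le_ld le_2dn)[I cardI [ratio_le n_le]].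
exists I; split => //.
by apply: log2_lower_bounds ratio_le n_le; lia.
Qed.
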